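(* Let $\langle S,L,\tau,\ell\rangle$ be a labelled Markov chain and let $R$ be a bisimulation with $\simeq\,\subseteq R\subseteq\,\sim$. For all $s,t,u\in S$ with $(s,t)\in\mathrm{Filter}(R)$ and $(t,u)\in\mathrm{Filter}(R)$, if $s\simeq t$ or $t\simeq u$, then $(s,u)\in\mathrm{Filter}(R)$.
   Context: Labelled Markov chain $\langle S,L,\tau,\ell\rangle$: finite $S$, finite $L$, $\tau:S\to\mathcal{D}(S)$, $\ell:S\to L$, $|\ell(S)|\ge2$. $\Omega(\mu,\nu)$ = couplings (distributions on $S\times S$ with marginals $\mu,\nu$). A bisimulation is an equivalence relation $R\subseteq S\times S$ such that for all $(s,t)\in R$, $\ell(s)=\ell(t)$ and some $\omega\in\Omega(\tau(s),\tau(t))$ has $\mathrm{support}(\omega)\subseteq R$; $\sim$ is bisimilarity (union of all bisimulations). $S^2_\Delta=\{(s,s)\}$, $S^2_1=\{(s,t)\mid\ell(s)\ne\ell(t)\}$. A policy is $P:S\times S\to\mathcal{D}(S\times S)$ with $P(s,t)\in\Omega(\tau(s),\tau(t))$ for $(s,t)\notin S^2_1$ and $P(s,t)$ the point mass at $(s,t)$ for $(s,t)\in S^2_1$; $\mathcal{P}$ = set of policies, inducing Markov chains $\langle S\times S,P\rangle$. Robust bisimilarity: $s\simeq t$ iff some $P\in\mathcal{P}$ makes $(s,t)$ reach $S^2_\Delta$ with probability $1$ in $\langle S\times S,P\rangle$. $R$ supports a path $(u_1,v_1)\dots(u_n,v_n)$ of $\langle S\times S,P\rangle$ if $(u_i,v_i)\in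 R$ and $\mathrm{support}(P(u_i,v_i))\subseteq R$ for all $i$. $\mathrm{Filter}(R)=\{(s,t)\in R\mid\exists P\in\mathcal{P}$ such that $R$ supports a path from $(s,t)$ to $S^2_\Delta$ in $\langle S\times S,P\rangle\}$. *)

From mathcomp Require Import all_boot all_order all_algebra.
From mathcomp Require Import reals.
Set Implicit Arguments. Unset Strict Implicit. Unset Printing Implicit Defensive.
Import Order.TTheory GRing.Theory Num.Theory.
Local Open Scope ring_scope.

Section LMC.
Variable R : realType.

Definition is_distr (X : finType) (mu : {ffun X -> R}) : Prop :=
  (forall x, 0 <= mu x) /\ \sum_x mu x = 1.

Definition support (X : finType) (mu : {ffun X -> R}) : pred X :=
  fun x => mu x != 0.

Variable S : finType.

Definition coupling (mu nu : {ffun S -> R}) (w : {ffun (S * S) -> R}) : Prop :=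
  is_distr w /\
  (forall x, \sum_y w (x, y) = mu x) /\
  (forall y, \sum_x w (x, y) = nu y).

Variable L : finType.
Variable tau : S -> {ffun S -> R}.
Variable ell : S -> L.

Definition equivalence (B : rel S) : Prop :=
  (forall s, B s s) /\ (forall s t, B s t -> B t s) /\
  (forall s t u, B s t -> B t u -> B s u).

Definition bisimulation (B : rel S) : Prop :=
  equivalence B /\
  forall s t, B s t -> ell s = ell t /\
    exists w, coupling (tau s) (tau t) w /\
      (forall p, support w p -> B p.1 p.2).

Definition bisimilar (s t : S) : Prop :=
  exists B, bisimulation B /\ B s t.

Definition diag (p : S * S) : bool := p.1 == p.2.
Definition difflab (p : S * S) : bool := ell p.1 != ell p.2.

Definition policy (P : S * S -> {ffun (S * S) -> R}) : Prop :=
  forall p, if difflab p then P p = [ffun q => if q == p then 1 else 0]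
            else coupling (tau p.1) (tau p.2) (P p).

Fixpoint reachn (X : finType) (P : X -> {ffun X -> R}) (T : pred X) (n : nat)
  (x : X) : R :=
  if T x then 1 else
  match n with
  | 0 => 0
  | n'.+1 => \sum_y P x y * reachn P T n' y
  end.

(* reaching T with probability 1: the supremum over n of the probabilities
   of reaching T within n steps equals 1 (these are all <= 1) *)
Definition reach_as (X : finType) (P : X -> {ffun X -> R}) (T : pred X) (x : X)
  : Prop := forall e : R, 0 < e -> exists n, 1 - e <= reachn P T n x.

Definition robust (s t : S) : Prop :=
  exists P, policy P /\ reach_as P diag (s, t).

Definition supports (B : rel S) (P : S * S -> {ffun (S * S) -> R})
  (x : S * S) (p : seq (S * S)) : Prop :=
  path (fun a b => 0 < P a b) x p /\
  forall q, q \in x :: p -> B q.1 q.2 /\ (forall r, support (P q) r -> B r.1 r.2).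

Definition Filter (B : rel S) (s t : S) : Prop :=
  B s t /\ exists P, policy P /\
    exists p : seq (S * S), supports B P (s, t) p /\ diag (last (s, t) p).

End LMC.

(* Call q good ([supports_to_diag q]) when some policy has an R-supported path from
   q to the diagonal.
   Suppose P reaches the diagonal almost surely from (x, y), and R supports a Q-path
   from (y, z) to the diagonal; then (x, z) is good, by induction along the Q-path.
   Every pair reachable from (x, y) under P is robustly bisimilar, hence in R.  A
   Q-step (y, z) -> (y1, z1) is matched by a P-step (x, y) -> (x1, y1), since the
   second marginal of P (x, y) at y1 is tau y y1 > 0; gluing P (x, y) and Q (y, z)
   along tau y gives a coupling of tau x and tau z, supported in R by transitivity,
   that moves (x, z) to (x1, z1), which is good by induction.  At the end of the
   path y = z, and the positive-probability route of P to the diagonal is itself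
   R-supported.  The other case follows by transposing pairs and policies. *)

From mathcomp Require Import all_boot all_order all_algebra.
From mathcomp Require Import reals.
From mathcomp Require Import lra.
Import Order.TTheory GRing.Theory Num.Theory.
Local Open Scope ring_scope.
Set Implicit Arguments. Unset Strict Implicit.

Lemma sumr_gt0_exists (R : realDomainType) (X : finType) (F : X -> R) :
  0 < \sum_x F x -> exists x, 0 < F x.
Proof.
move=> Hsum; have [/existsP //|/existsPn Hn] := boolP [exists x, 0 < F x].
suff : \sum_x F x <= 0 by rewrite leNgt Hsum.
by rewrite -oppr_ge0 -sumrN; apply: sumr_ge0 => x _; rewrite oppr_ge0 leNgt Hn.
Qed.

Section ReachProbability.
Variables (R : realType) (X : finType) (P : X -> {ffun X -> R}) (T : pred X).
Hypothesis P_distr : forall x, is_distr (P x).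

Lemma sum_distr_neq x r : \sum_(y | y != r) P x y = 1 - P x r.
Proof. by rewrite -(proj2 (P_distr x)) [in RHS](bigD1 r) //= addrAC subrr add0r. Qed.

Lemma distr_le1 x r : P x r <= 1.
Proof.
by rewrite -subr_ge0 -sum_distr_neq; apply: sumr_ge0 => y _; case: (P_distr x).
Qed.

Lemma reachn_ge0 n x : 0 <= reachn P T n x.
Proof.
elim: n x => [|n IH] x /=; case: (T x) => //.
by apply: sumr_ge0 => y _; apply: mulr_ge0; [case: (P_distr x)|].
Qed.

Lemma reachn_le1 n x : reachn P T n x <= 1.
Proof.
elim: n x => [|n IH] x /=; case: (T x) => //.
rewrite -(proj2 (P_distr x)); apply: ler_sum => y _.
by rewrite ler_piMr //; case: (P_distr x).
Qed.

Lemma reach_as_succ q r :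
  ~~ T q -> reach_as P T q -> 0 < P q r -> reach_as P T r.
Proof.
move=> nTq Hq Pqr e e0.
have [e_ge1|e_lt1] := leP 1 e.
  by exists 0%N; have := reachn_ge0 0 r; lra.
have Pqr1 := distr_le1 q r.
have [n] := Hq (P q r * e) (mulr_gt0 Pqr e0).
case: n => [|n] /=; rewrite (negPf nTq); first nra.
move=> Hn; exists n.
(* reaching from q within n.+1 steps has probability at most
   (1 - P q r) + P q r * (reaching from r within n steps) *)
have others : \sum_(y | y != r) P q y * reachn P T n y <= 1 - P q r.
  rewrite -sum_distr_neq; apply: ler_sum => y _.
  by rewrite ler_piMr ?reachn_le1 //; case: (P_distr q).
move: Hn; rewrite (bigD1 r) //=; nra.
Qed.

Lemma reach_as_reachn_gt0 x : reach_as P T x -> exists n, 0 < reachn P T n x.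
Proof. by move=> /(_ 2^-1 ltac:(lra)) [n Hn]; exists n; lra. Qed.

Lemma reachn_succ_gt0 n q : ~~ T q -> 0 < reachn P T n.+1 q ->
  exists2 r, 0 < P q r & 0 < reachn P T n r.
Proof.
rewrite /= => /negPf -> /sumr_gt0_exists [r]; rewrite !lt0r mulf_eq0 negb_or.
case/andP=> /andP [Pqr_neq0 reach_neq0] _; exists r.
  by rewrite lt0r Pqr_neq0; case: (P_distr q) => ->.
by rewrite lt0r reach_neq0 reachn_ge0.
Qed.

End ReachProbability.

Section Couplings.
Variables (R : realType) (S : finType).
Implicit Types (mu nu xi : {ffun S -> R}) (w : {ffun S * S -> R}).

Lemma sum_pair (F : S * S -> R) : \sum_p F p = \sum_a \sum_b F (a, b).
Proof. by rewrite pair_bigA; apply: eq_bigr => -[]. Qed.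

Lemma coupling_ge0 mu nu w p : coupling mu nu w -> 0 <= w p.
Proof. by case=> -[]. Qed.

Lemma coupling_le_l mu nu w a b : coupling mu nu w -> w (a, b) <= mu a.
Proof.
move=> C; have [_ [<- _]] := C; rewrite (bigD1 b) //= lerDl.
by apply: sumr_ge0 => c _; apply: coupling_ge0 C.
Qed.

Lemma coupling_le_r mu nu w a b : coupling mu nu w -> w (a, b) <= nu b.
Proof.
move=> C; have [_ [_ <-]] := C; rewrite (bigD1 a) //= lerDl.
by apply: sumr_ge0 => c _; apply: coupling_ge0 C.
Qed.

Lemma coupling_support_gt0 mu nu w p :
  coupling mu nu w -> support w p -> 0 < w p.
Proof. by move=> C wp; rewrite lt0r (coupling_ge0 _ C) andbT. Qed.

Lemma coupling_swap mu nu w :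
  coupling mu nu w -> coupling nu mu [ffun p => w (swap_pair p)].
Proof.
move=> C; have [[_ w1] [wl wr]] := C.
split; [split|split] => [p||x|y]; rewrite ?ffunE ?(coupling_ge0 _ C) //.
- rewrite -w1 [in RHS](reindex_inj (can_inj swap_pairK)).
  by apply: eq_bigr => p _; rewrite ffunE.
- by rewrite -wr; apply: eq_bigr => y _; rewrite ffunE.
- by rewrite -wl; apply: eq_bigr => x _; rewrite ffunE.
Qed.

Lemma coupling_comp mu nu xi w1 w2 :
  coupling mu nu w1 -> coupling nu xi w2 ->
  exists w, [/\ coupling mu xi w,
    forall a c, support w (a, c) -> exists b, support w1 (a, b) /\ support w2 (b, c) &
    forall a b c, 0 < w1 (a, b) -> 0 < w2 (b, c) -> 0 < w (a, c)].
Proof.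
move=> C1 C2; have [[_ sum_w1] [m1_w1 m2_w1]] := C1; have [_ [m1_w2 m2_w2]] := C2.
(* glue along the common marginal nu; where nu b = 0 the junk value x / 0 = 0
   is harmless, as w1 and w2 vanish there *)
pose term a b c := w1 (a, b) * w2 (b, c) / nu b.
pose w := [ffun p : S * S => \sum_b term p.1 b p.2].
have term_ge0 a b c : 0 <= term a b c.
  by rewrite divr_ge0 ?mulr_ge0 // ?(coupling_ge0 _ C1) ?(coupling_ge0 _ C2)
    // -(m2_w1 b) sumr_ge0 // => a' _; apply: coupling_ge0 C1.
have cancel_nu b (x : R) : (nu b = 0 -> x = 0) -> x * nu b / nu b = x.
  move=> x0; have [nu0|nu_neq0] := eqVneq (nu b) 0; last by rewrite mulfK.
  by rewrite x0 // !mul0r.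
have w1_nu0 a b : nu b = 0 -> w1 (a, b) = 0.
  move=> nu0; apply/eqP; rewrite eq_le (coupling_ge0 _ C1) andbT.
  by rewrite -nu0 (coupling_le_r _ _ C1).
have w2_nu0 b c : nu b = 0 -> w2 (b, c) = 0.
  move=> nu0; apply/eqP; rewrite eq_le (coupling_ge0 _ C2) andbT.
  by rewrite -nu0 (coupling_le_l _ _ C2).
have marg1 a : \sum_c w (a, c) = mu a.
  under eq_bigr do rewrite ffunE /=.
  rewrite exchange_big -m1_w1; apply: eq_bigr => b _.
  under eq_bigr do rewrite /term mulrAC.
  by rewrite -mulr_sumr m1_w2 mulrAC cancel_nu // => /w1_nu0->.
have Cw : coupling mu xi w.
  split; [split|split] => [p||a|c] //.
  - by rewrite ffunE; apply: sumr_ge0 => b _; apply: term_ge0.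
  - rewrite sum_pair -sum_w1 sum_pair; apply: eq_bigr => a _.
    by rewrite marg1 m1_w1.
  - rewrite -m2_w2; under eq_bigr do rewrite ffunE /=.
    rewrite exchange_big; apply: eq_bigr => b _.
    under eq_bigr do rewrite /term -mulrA.
    by rewrite -mulr_suml m2_w1 mulrC mulrAC cancel_nu // => /w2_nu0->.
exists w; split => //.
- move=> a c /(coupling_support_gt0 Cw); rewrite ffunE => /sumr_gt0_exists [b].
  rewrite lt0r => /andP [+ _]; rewrite /term !mulf_eq0 !negb_or.
  by case/andP=> /andP [? ?] _; exists b.
- move=> a b c w1_gt0 w2_gt0; rewrite ffunE (bigD1 b) //=.
  apply: ltr_wpDr; first by apply: sumr_ge0 => b' _; apply: term_ge0.
  rewrite /term divr_gt0 ?mulr_gt0 //.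
  exact: lt_le_trans w1_gt0 (coupling_le_r _ _ C1).
Qed.

End Couplings.

Section Policies.
Variables (R : realType) (S L : finType) (tau : S -> {ffun S -> R}) (ell : S -> L).
Implicit Types (P : S * S -> {ffun S * S -> R}) (q r : S * S).

Lemma policy_distr P : policy tau ell P -> forall q, is_distr (P q).
Proof.
move=> HP q; have := HP q; case: ifP => [_ ->|_ []//].
split=> [r|]; first by rewrite ffunE; case: eqP.
rewrite (bigD1 q) //= ffunE eqxx big1 ?addr0 // => r /negPf r_neq_q.
by rewrite ffunE r_neq_q.
Qed.

Lemma policy_coupling P q : policy tau ell P -> ell q.1 = ell q.2 ->
  coupling (tau q.1) (tau q.2) (P q).
Proof. by move=> HP Eq; have := HP q; rewrite /difflab Eq eqxx. Qed.

Lemma policy_update P q w : policy tau ell P -> ell q.1 = ell q.2 ->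
  coupling (tau q.1) (tau q.2) w -> policy tau ell (fun p => if p == q then w else P p).
Proof.
move=> HP Eq Cw p /=; case: eqP => [->|_]; last exact: HP.
by rewrite /difflab Eq eqxx.
Qed.

Definition transpose_policy P q : {ffun S * S -> R} :=
  [ffun r => P (swap_pair q) (swap_pair r)].

Lemma policy_transpose P : policy tau ell P -> policy tau ell (transpose_policy P).
Proof.
move=> HP q; have := HP (swap_pair q); rewrite /difflab /= eq_sym.
case: ifP => _ => [P_q|/coupling_swap //].
by apply/ffunP => r; rewrite !ffunE P_q ffunE (inj_eq (can_inj swap_pairK)).
Qed.

Lemma reachn_transpose P n q :
  reachn (transpose_policy P) (@diag S) n q = reachn P (@diag S) n (swap_pair q).
Proof.
elim: n q => [|n IH] q /=; rewrite /diag eq_sym //=; case: eqP => // _.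
rewrite [RHS](reindex_inj (can_inj swap_pairK)); apply: eq_bigr => r _.
by rewrite ffunE IH.
Qed.

Lemma robust_sym s t : robust tau ell s t -> robust tau ell t s.
Proof.
case=> P [HP Hreach]; exists (transpose_policy P); split.
  exact: policy_transpose.
by move=> e /Hreach [n Hn]; exists n; rewrite reachn_transpose.
Qed.

End Policies.

Section SupportedPaths.
Variables (R : realType) (S L : finType) (tau : S -> {ffun S -> R}) (ell : S -> L).
Variable B : rel S.
Hypothesis HB : bisimulation tau ell B.
Implicit Types (P : S * S -> {ffun S * S -> R}) (q r x : S * S) (p : seq (S * S)).

Let B_refl s : B s s. Proof. by have [[]] := HB. Qed.
Let B_trans s t u : B s t -> B t u -> B s u.
Proof. by have [[_ [_ trans]] _] := HB; apply: trans. Qed.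
Let B_sym s t : B s t -> B t s. Proof. by have [[_ [sym _]] _] := HB; apply: sym. Qed.

Lemma bisim_label s t : B s t -> ell s = ell t.
Proof. by case: HB => _ /[apply] -[]. Qed.

Definition supports_to_diag q : Prop :=
  exists P, policy tau ell P /\ exists p, supports B P q p /\ diag (last q p).

Lemma supports_suffix P x p q : supports B P x p -> q \in x :: p ->
  exists2 p', supports B P q p' & last q p' = last x p.
Proof.
elim: p x => [|y p IH] x Hs; first by rewrite mem_seq1 => /eqP ->; exists [::].
rewrite inE => /predU1P [->|Hq]; first by exists (y :: p).
apply: IH Hq; case: Hs => /= /andP [_ Hpath] Hmem; split => // q' Hq'.
by apply: Hmem; rewrite inE Hq' orbT.
Qed.

Lemma supports_transpose P x p : supports B P x p ->
  supports B (transpose_policy P) (swap_pair x) (map swap_pair p).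
Proof.
case=> Hpath Hmem; split.
  rewrite path_map; apply: etrans Hpath; apply: eq_path => a b /=.
  by rewrite ffunE !swap_pairK.
move=> _ /(@mapP _ _ _ (x :: p)) [q Hq ->].
have [Bq Hsupp] := Hmem q Hq; split; first exact: B_sym.
by move=> r; rewrite /support ffunE swap_pairK => /(Hsupp (swap_pair r)) /B_sym.
Qed.

Lemma supports_to_diag_sym s t :
  supports_to_diag (s, t) -> supports_to_diag (t, s).
Proof.
case=> P [HP [p [Hs Hlast]]]; exists (transpose_policy P); split.
  exact: policy_transpose.
exists (map swap_pair p); split; first exact: (supports_transpose Hs).
by rewrite -[(t, s)]/(swap_pair (s, t)) last_map /diag eq_sym.
Qed.

Lemma supports_to_diag_step q r w : B q.1 q.2 -> coupling (tau q.1) (tau q.2) w ->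
  (forall r', support w r' -> B r'.1 r'.2) -> 0 < w r ->
  supports_to_diag r -> supports_to_diag q.
Proof.
move=> Bq Cw Sw wr [P [HP [p [Hs Hlast]]]].
have [Hin|Hnin] := boolP (q \in r :: p).
  have [p' Hs' Hlast'] := supports_suffix Hs Hin.
  by exists P; split => //; exists p'; rewrite Hlast'.
(* q is not on the path, so redirecting the policy at q to w leaves the path intact *)
pose P' q0 := if q0 == q then w else P q0.
have P'_off q' : q' \in r :: p -> P' q' = P q'.
  by rewrite /P'; case: eqP => // ->; rewrite (negPf Hnin).
exists P'; split; first exact: policy_update (bisim_label Bq) Cw.
exists (r :: p); split => //; case: Hs => Hpath Hmem; split.
  rewrite /= {1}/P' eqxx wr /=; apply: etrans Hpath.
  apply: (@eq_in_path _ (mem (r :: p))); last by apply/allP.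
  by move=> a b /P'_off -> _.
move=> q'; rewrite inE => /predU1P [->|Hq']; first by rewrite /P' eqxx.
by rewrite P'_off //; apply: Hmem.
Qed.

Lemma diag_supports_to_diag P q : policy tau ell P -> diag q -> supports_to_diag q.
Proof.
case: q => s t HP /eqP /= <-.
have [_ /(_ s s (B_refl s)) [_ [w [Cw Sw]]]] := HB.
exists (fun q => if q == (s, s) then w else P q); split.
  exact: policy_update Cw.
exists [::]; split; last exact: eqxx.
by split => // q; rewrite mem_seq1 => /eqP ->; rewrite eqxx.
Qed.

Hypothesis robust_B : forall s t, robust tau ell s t -> B s t.

Lemma reach_diag_B P q : policy tau ell P -> reach_as P (@diag S) q -> B q.1 q.2.
Proof. by case: q => s t HP Hq; apply: robust_B; exists P. Qed.

Lemma reach_diag_support_B P q r : policy tau ell P -> ~~ diag q ->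
  reach_as P (@diag S) q -> support (P q) r -> B r.1 r.2.
Proof.
move=> HP nDq Hq Pqr; apply: (reach_diag_B HP); apply: (reach_as_succ (policy_distr HP) nDq Hq).
by rewrite lt0r (policy_distr HP q).1 andbT.
Qed.

Lemma reach_diag_supports_to_diag P q : policy tau ell P ->
  reach_as P (@diag S) q -> supports_to_diag q.
Proof.
move=> HP Hq; have [n] := reach_as_reachn_gt0 Hq.
elim: n q Hq => [|n IH] q Hq Hn; have [Dq|nDq] := boolP (diag q);
  try exact: diag_supports_to_diag HP Dq.
  by move: Hn; rewrite /= (negPf nDq) ltxx.
have [r Pqr Hr] := reachn_succ_gt0 (policy_distr HP) nDq Hn.
have Bq := reach_diag_B HP Hq.
apply: (supports_to_diag_step Bq (policy_coupling HP (bisim_label Bq)) _ Pqr).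
  by move=> r'; apply: reach_diag_support_B HP nDq Hq.
exact: IH (reach_as_succ (policy_distr HP) nDq Hq Pqr) Hr.
Qed.

Lemma supports_comp_reach_diag P Q p (x y z : S) :
  policy tau ell P -> policy tau ell Q ->
  supports B Q (y, z) p -> diag (last (y, z) p) ->
  reach_as P (@diag S) (x, y) -> supports_to_diag (x, z).
Proof.
move=> HP HQ; elim: p x y z => [|[y1 z1] p IH] x y z Hs Hlast Hx.
  by move: Hlast => /eqP /= <-; apply: reach_diag_supports_to_diag HP Hx.
have [Byz Syz] := proj2 Hs (y, z) (mem_head _ _).
have [Qyz Hs1] : 0 < Q (y, z) (y1, z1) /\ supports B Q (y1, z1) p.
  case: Hs => /= /andP [Qyz Hpath] Hmem; split => //; split => // q Hq.
  by apply: Hmem; rewrite inE Hq orbT.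
have [->|Nxy] := eqVneq x y; first by exists Q; split => //; exists ((y1, z1) :: p).
have nDxy : ~~ diag (x, y) by rewrite /diag /= Nxy.
have Bxy := reach_diag_B HP Hx.
have CP := policy_coupling HP (bisim_label Bxy).
have CQ := policy_coupling HQ (bisim_label Byz).
(* the step y -> y1 taken by Q is matched by some step x -> x1 of P *)
have : 0 < \sum_x1 P (x, y) (x1, y1).
  by rewrite (proj2 (proj2 CP) y1); apply: lt_le_trans Qyz (coupling_le_l _ _ CQ).
case/sumr_gt0_exists => x1 Pxy.
have [w [Cw Sw Pw]] := coupling_comp CP CQ.
apply: (supports_to_diag_step (q := (x, z)) (B_trans Bxy Byz) Cw _ (Pw _ _ _ Pxy Qyz)).
  case=> a c /Sw [b [Pab Qbc]]; apply: (@B_trans _ b).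
    exact: reach_diag_support_B HP nDxy Hx Pab.
  exact: Syz (b, c) Qbc.
exact: IH Hs1 Hlast (reach_as_succ (policy_distr HP) nDxy Hx Pxy).
Qed.

Lemma supports_to_diag_trans s t u :
  supports_to_diag (s, t) -> supports_to_diag (t, u) ->
  robust tau ell s t \/ robust tau ell t u -> supports_to_diag (s, u).
Proof.
move=> Gst Gtu [[P [HP Hst]]|/robust_sym [P [HP Hut]]].
  by have [Q [HQ [p [Hs Hlast]]]] := Gtu; apply: supports_comp_reach_diag HP HQ Hs Hlast Hst.
have [Q [HQ [p [Hs Hlast]]]] := supports_to_diag_sym Gst.
exact/supports_to_diag_sym/(supports_comp_reach_diag HP HQ Hs Hlast Hut).
Qed.

End SupportedPaths.

Unset Implicit Arguments.

Theorem proposition7 (R : realType) (S L : finType)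
  (tau : S -> {ffun S -> R}) (ell : S -> L)
  (tau_distr : forall s, is_distr (tau s))
  (two_labels : (2 <= #|[set ell s | s in S]|)%N)
  (B : rel S)
  (HB : bisimulation tau ell B)
  (Hlo : forall s t, robust tau ell s t -> B s t)
  (Hhi : forall s t, B s t -> bisimilar tau ell s t) :
  forall s t u, Filter tau ell B s t -> Filter tau ell B t u ->
    (robust tau ell s t \/ robust tau ell t u) ->
    Filter tau ell B s u.
Proof.
move=> s t u [Bst Gst] [Btu Gtu] Hrob; split.
  by have [[_ [_ B_trans]] _] := HB; apply: B_trans Bst Btu.
exact: (supports_to_diag_trans HB Hlo Gst Gtu Hrob).
Qed.
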